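(* Let $\mathcal{A}=(Q,\Sigma,\delta)$ be a strongly connected DFA with $n$ states, let $P$ be a positive probability distribution on $\Sigma$, and let $\alpha$ be a stationary distribution of the Markov chain of $\mathcal{A}$ under $P$, i.e. a stochastic vector with $\alpha\sum_{a\in\Sigma}P(a)[a]=\alpha$. Then $\mathcal{A}$ is synchronizing if and only if there exists a set of words $W\subseteq\Sigma^*$ which is complete for $\mathbb{R}^n$ with respect to $\alpha$.
   Context: A DFA $\mathcal{A}=(Q,\Sigma,\delta)$ has a finite state set $Q=\{1,\dots,n\}$, finite alphabet $\Sigma$ and total transition function, extended to words; $q.w=\delta(q,w)$. It is synchronizing if some word $w$ satisfies $|Q.w|=1$. It is strongly connected if every state is reachable from every state. Vectors are row vectors; $[q]\in\mathbb{R}^n$ is the standard basis vector of state $q$; for a word $w$, $[w]$ is the $n\times n$ 0-1 matrix with $[w]_{p,q}=1$ iff $p.w=q$. A stochastic vector is a non-negative vector whose entries sum to $1$. A set of words $W$ is complete for a subspace $V\le\mathbb{R}^n$ with respect to $g\in V$ if $\langle g[w]\mid w\in W\rangle=V$. *)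

From HB Require Import structures.
From mathcomp Require Import all_boot all_order all_algebra.
Set Implicit Arguments. Unset Strict Implicit. Unset Printing Implicit Defensive.
Import Order.TTheory GRing.Theory Num.Theory.
Local Open Scope ring_scope.

(* A DFA with state set 'I_n (states 1..n of the paper, 0-indexed here),
   finite alphabet Sigma and total transition function delta. *)

Definition dact (n : nat) (Sigma : finType) (delta : 'I_n -> Sigma -> 'I_n)
  (q : 'I_n) (w : seq Sigma) : 'I_n := foldl delta q w.

Definition synchronizing (n : nat) (Sigma : finType)
  (delta : 'I_n -> Sigma -> 'I_n) : Prop :=
  exists w : seq Sigma, #|[set dact delta q w | q : 'I_n]| = 1%N.

Definition strongly_connected (n : nat) (Sigma : finType)
  (delta : 'I_n -> Sigma -> 'I_n) : Prop :=
  forall p q : 'I_n, exists w : seq Sigma, dact delta p w = q.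

Definition wmx (R : nzRingType) (n : nat) (Sigma : finType)
  (delta : 'I_n -> Sigma -> 'I_n) (w : seq Sigma) : 'M[R]_n :=
  \matrix_(p < n, q < n) (dact delta p w == q)%:R.

Definition stochastic (R : numDomainType) (n : nat) (v : 'rV[R]_n) : Prop :=
  (forall i, 0 <= v 0 i) /\ \sum_(i < n) v 0 i = 1.

Definition pos_distribution (R : numDomainType) (Sigma : finType)
  (P : Sigma -> R) : Prop :=
  (forall a, 0 < P a) /\ \sum_(a : Sigma) P a = 1.

Definition complete_for_full (R : nzRingType) (n : nat) (Sigma : finType)
  (delta : 'I_n -> Sigma -> 'I_n) (W : pred (seq Sigma)) (g : 'rV[R]_n) : Prop :=
  forall v : 'rV[R]_n, exists (s : seq (seq Sigma)) (c : seq R),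
    all W s /\ size c = size s /\
    v = \sum_(i < size s) c`_i *: (g *m wmx R delta (nth [::] s i)).

From HB Require Import structures.
From mathcomp Require Import all_boot all_order all_algebra.
From Stdlib Require Import Classical ClassicalEpsilon.
Set Implicit Arguments. Unset Strict Implicit. Unset Printing Implicit Defensive.
Import Order.TTheory GRing.Theory Num.Theory.
Local Open Scope ring_scope.

(* If a word w collapses Q onto q0, then alpha [w u] = [q] whenever q0.u = q,
   so by strong connectivity every basis vector is of the form alpha [w].
   Conversely, for a non-synchronizing automaton consider the sets T none of
   whose preimages T.w^-1 = {p | p.w in T} is all of Q (singletons are such
   sets) and pick one of maximal weight t = alpha(T).  Stationarity writes
   alpha(T) as a convex combination of the weights alpha(T.a^-1), which are at
   most t; hence they all equal t, and inductively alpha(T.w^-1) = t for every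
   word w.  The column vector [T] - t [Q] is then annihilated by every
   alpha [w], but it is nonzero at any state outside T, so no set of words is
   complete. *)

Lemma convex_comb_eq_ub (R : numDomainType) (I : finType) (P y : I -> R) x :
  (forall i, 0 < P i) -> \sum_i P i = 1 -> x = \sum_i P i * y i ->
  (forall i, y i <= x) -> forall i, y i = x.
Proof.
move=> P_gt0 P_sum1 x_comb y_le i.
have gap_ge0 j : true -> 0 <= P j * (x - y j).
  by move=> _; rewrite mulr_ge0 ?subr_ge0 ?y_le ?ltW ?P_gt0.
have gap_sum0 : \sum_j P j * (x - y j) = 0.
  under eq_bigr => j _ do rewrite mulrBr.
  by rewrite sumrB -mulr_suml P_sum1 mul1r -x_comb subrr.
have /eqP := psumr_eq0P gap_ge0 gap_sum0 (i := i) isT.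
by rewrite mulf_eq0 gt_eqF //= subr_eq0 => /eqP.
Qed.

Lemma exists_argmax (I : finType) (R : realDomainType) (A : I -> Prop)
    (f : I -> R) i0 :
  A i0 -> exists2 i, A i & forall j, A j -> f j <= f i.
Proof.
pose a i : bool := excluded_middle_informative (A i).
have aP i : a i <-> A i by rewrite /a; case: excluded_middle_informative.
move=> /aP a_i0; have [i /aP A_i f_max] := arg_maxP f a_i0.
by exists i => // j /aP; apply: f_max.
Qed.

Definition char_cv (R : nzRingType) n (T : {set 'I_n}) : 'cV[R]_n :=
  \col_q (q \in T)%:R.

Definition weight (R : nzRingType) n (alpha : 'rV[R]_n) (T : {set 'I_n}) : R :=
  \sum_(j in T) alpha 0 j.

Lemma mulmx_char_cv (R : nzRingType) n (alpha : 'rV[R]_n) T :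
  alpha *m char_cv R T = (weight alpha T)%:M.
Proof.
apply/matrixP => i j; rewrite !ord1 !mxE eqxx mulr1n [RHS]big_mkcond.
by apply: eq_bigr => k _; rewrite mxE; case: (k \in T); rewrite ?mulr1 ?mulr0.
Qed.

Lemma weight_setT (R : nzRingType) n (alpha : 'rV[R]_n) :
  weight alpha setT = \sum_i alpha 0 i.
Proof. by apply: eq_bigl => i; rewrite inE. Qed.

Section Preimages.

Variables (n : nat) (Sigma : finType) (delta : 'I_n -> Sigma -> 'I_n).

Lemma dact_cat p u v : dact delta p (u ++ v) = dact delta (dact delta p u) v.
Proof. exact: foldl_cat. Qed.

Definition preim_word (T : {set 'I_n}) w := [set p | dact delta p w \in T].

Lemma preim_word_nil T : preim_word T [::] = T.
Proof. by apply/setP => p; rewrite inE. Qed.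

Lemma preim_word_cat T u v :
  preim_word T (u ++ v) = preim_word (preim_word T v) u.
Proof. by apply/setP => p; rewrite !inE dact_cat. Qed.

Lemma preim_wordT w : preim_word setT w = setT.
Proof. by apply/setP => p; rewrite !inE. Qed.

Lemma wmx_char_cv (R : nzRingType) w T :
  wmx R delta w *m char_cv R T = char_cv R (preim_word T w).
Proof.
apply/matrixP => p j; rewrite !mxE (bigD1 (dact delta p w)) //= big1.
  by rewrite !mxE eqxx mul1r addr0 inE.
by move=> q /negbTE q_neq; rewrite !mxE eq_sym q_neq mul0r.
Qed.

Lemma preim_set1_full_sync q w :
  preim_word [set q] w = setT -> synchronizing delta.
Proof.
have in_full p : preim_word [set q] w = setT -> dact delta p w = q.
  move=> full; have : p \in preim_word [set q] w by rewrite full inE.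
  by rewrite inE => /set1P.
move=> full; exists w; apply/eqP/cards1P; exists q.
apply/setP => r; rewrite inE.
apply/imsetP/eqP => [[p _ ->] | ->]; first exact: in_full.
by exists q; rewrite ?in_full.
Qed.

Lemma mulmx_wmx_sync (R : nzRingType) (g : 'rV[R]_n) w q0 :
  (forall p, dact delta p w = q0) ->
  g *m wmx R delta w = (\sum_i g 0 i) *: 'e_q0.
Proof.
move=> w_sync; apply/matrixP => i j; rewrite !ord1 !mxE mulr_suml.
by apply: eq_bigr => p _; rewrite !mxE w_sync eq_sym.
Qed.

Lemma sync_mulmx_wmx_unit (R : nzRingType) (g : 'rV[R]_n) :
  strongly_connected delta -> synchronizing delta -> \sum_i g 0 i = 1 ->
  forall q, exists w, g *m wmx R delta w = 'e_q.
Proof.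
move=> strong [w /eqP /cards1P [q0 img_w]] g_sum1 q.
have w_sync p : dact delta p w = q0.
  by apply/set1P; rewrite -img_w; apply: imset_f.
have [u q0u] := strong q0 q; exists (w ++ u).
rewrite (@mulmx_wmx_sync _ g _ q) ?g_sum1 ?scale1r // => p.
by rewrite dact_cat w_sync.
Qed.

Lemma complete_for_full_unit (R : nzRingType) (W : pred (seq Sigma))
    (g : 'rV[R]_n) :
  (forall q, exists2 w, W w & g *m wmx R delta w = 'e_q) ->
  complete_for_full delta W g.
Proof.
move=> /fin_all_exists2 [u0 W_u gu] v.
pose u q : seq Sigma := u0 q; pose e := index_enum 'I_n.
exists (map u e), (map (v 0) e); rewrite !size_map; split; last split=> //.
  by apply/allP => _ /mapP [q _ ->].
rewrite {1}(row_sum_delta v).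
case: (pickP (fun _ : 'I_n => true)) => [q0 _ | no_state].
  rewrite (big_nth q0) big_mkord; apply: eq_bigr => i _.
  have i_lt : (i < size e)%N := ltn_ord i.
  by rewrite (nth_map q0 0 _ i_lt) (nth_map q0 [::] u i_lt) gu.
have -> : e = [::] by case: e no_state => // q ? /(_ q).
by rewrite big_ord0; apply: big1 => j; have := no_state j.
Qed.

Lemma complete_for_full_annihilator (R : nzRingType) (W : pred (seq Sigma))
    (g : 'rV[R]_n) (x : 'cV[R]_n) :
  complete_for_full delta W g -> (forall w, g *m wmx R delta w *m x = 0) ->
  x = 0.
Proof.
move=> W_full gx0; apply/matrixP => q j; rewrite ord1 mxE.
have [s [c [_ [_ e_q]]]] := W_full 'e_q.
have := congr1 (fun v => (v *m x) 0 0) e_q.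
rewrite /= mulmx_suml big1 => [|i _]; last by rewrite -scalemxAl gx0 scaler0.
by rewrite -rowE !mxE.
Qed.

End Preimages.

Section NonSynchronizing.

Variables (R : realFieldType) (n : nat) (Sigma : finType).
Variables (delta : 'I_n -> Sigma -> 'I_n) (P : Sigma -> R) (alpha : 'rV[R]_n).
Hypotheses (P_pos : pos_distribution P) (alpha_sum1 : \sum_i alpha 0 i = 1).
Hypothesis alpha_stat :
  alpha *m (\sum_(a : Sigma) P a *: wmx R delta [:: a]) = alpha.
Hypothesis not_sync : ~ synchronizing delta.

Lemma weight_stationary T :
  weight alpha T = \sum_a P a * weight alpha (preim_word delta T [:: a]).
Proof.
have := congr1 (fun v => (v *m char_cv R T) 0 0) alpha_stat.
rewrite /= -mulmxA mulmx_suml mulmx_sumr summxE.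
rewrite mulmx_char_cv mxE eqxx mulr1n => <-.
apply: eq_bigr => a _.
by rewrite -scalemxAl -scalemxAr wmx_char_cv mulmx_char_cv !mxE eqxx mulr1n.
Qed.

Definition never_full T := forall w, preim_word delta T w != setT.

Lemma never_full_preim T w : never_full T -> never_full (preim_word delta T w).
Proof. by move=> T_nf v; rewrite -preim_word_cat. Qed.

Lemma never_full_set1 q : never_full [set q].
Proof. by move=> w; apply/eqP => /preim_set1_full_sync. Qed.

Lemma max_never_full_preim T :
  never_full T ->
  (forall U, never_full U -> weight alpha U <= weight alpha T) ->
  forall w, weight alpha (preim_word delta T w) = weight alpha T.
Proof.
move=> T_nf T_max; elim=> [|a w IH]; first by rewrite preim_word_nil.
rewrite -cat1s preim_word_cat -IH.
have [P_gt0 P_sum1] := P_pos.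
apply: (convex_comb_eq_ub P_gt0 P_sum1 (weight_stationary _)) => b.
by rewrite IH; apply/T_max/never_full_preim/never_full_preim.
Qed.

Lemma invariant_weight_set : exists T : {set 'I_n},
  [/\ T != setT, weight alpha T != 0 &
      forall w, weight alpha (preim_word delta T w) = weight alpha T].
Proof.
have [q0 _ | no_state] := pickP (fun _ : 'I_n => true); last first.
  by move: alpha_sum1; rewrite big_pred0 // => /eqP; rewrite eq_sym oner_eq0.
have [T T_nf T_max] := exists_argmax (weight alpha) (never_full_set1 q0).
exists T; split; last exact: max_never_full_preim.
  by have := T_nf [::]; rewrite preim_word_nil.
apply/eqP => T0; suff : \sum_i alpha 0 i <= 0 by rewrite alpha_sum1 ler10.
apply: sumr_le0 => q _; rewrite -T0 (_ : alpha 0 q = weight alpha [set q]).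
  exact/T_max/never_full_set1.
by rewrite /weight big_set1.
Qed.

Lemma nonsync_annihilator : exists2 x : 'cV[R]_n, x != 0 &
  forall w, alpha *m wmx R delta w *m x = 0.
Proof.
have [T [T_neqT T_w0 T_inv]] := invariant_weight_set.
have [q q_notin] : exists q, q \notin T.
  apply/existsP; apply: contraR T_neqT => /existsPn T_all.
  by apply/eqP/setP => q; rewrite inE; apply/negPn/T_all.
exists (char_cv R T - weight alpha T *: char_cv R setT).
  apply/negP => /eqP/matrixP/(_ q 0); rewrite !mxE (negbTE q_notin) inE.
  by rewrite mulr1 sub0r => /eqP; rewrite oppr_eq0 (negbTE T_w0).
move=> w; rewrite -mulmxA mulmxBr -scalemxAr !wmx_char_cv preim_wordT.
rewrite mulmxBr -scalemxAr !mulmx_char_cv T_inv weight_setT alpha_sum1.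
by rewrite scalemx1 subrr.
Qed.

End NonSynchronizing.

Theorem mainTheorem2 (R : realFieldType) (n : nat) (Sigma : finType)
  (delta : 'I_n -> Sigma -> 'I_n) (P : Sigma -> R) (alpha : 'rV[R]_n) :
  strongly_connected delta ->
  pos_distribution P ->
  stochastic alpha ->
  alpha *m (\sum_(a : Sigma) P a *: wmx R delta [:: a]) = alpha ->
  (synchronizing delta <->
   exists W : pred (seq Sigma), complete_for_full delta W alpha).
Proof.
move=> strong P_pos [_ alpha_sum1] alpha_stat; split.
  move=> sync; exists predT; apply: complete_for_full_unit => q.
  by have [w alpha_w] := sync_mulmx_wmx_unit strong sync alpha_sum1 q; exists w.
move=> [W W_full]; apply: NNPP => not_sync.
have [x x_neq0 x_ann] :=
  nonsync_annihilator P_pos alpha_sum1 alpha_stat not_sync.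
by move/eqP: x_neq0; apply; apply: complete_for_full_annihilator W_full x_ann.
Qed.
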